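(* Let $\mathbf A$ be a residuated semigroup and let $\mathrm{Idp}(\mathbf A)$ be its set of positive idempotents. For $p\in\mathrm{Idp}(\mathbf A)$ put $A_p:=\{a\in A: a\backslash a=p\}$ and ${}_pA:=\{a\in A: a/a=p\}$. The following are equivalent: (1) $\mathbf A$ satisfies $y\le (x/x)y$ and $y\le y(x\backslash x)$ for all $x,y\in A$; (2) every element of the form $a\backslash a$ or $a/a$ ($a\in A$) is positive; (3) $\mathrm{Idp}(\mathbf A)=\{a/a: a\in A\}=\{a\backslash a: a\in A\}$; (4) both families $\{{}_pA: p\in\mathrm{Idp}(\mathbf A)\}$ and $\{A_p: p\in\mathrm{Idp}(\mathbf A)\}$ are partitions of $A$ (i.e. their members cover $A$ and are pairwise disjoint).
   Context: A residuated semigroup is a structure $\langle A,\le,\cdot,\backslash,/\rangle$ where $\langle A,\le\rangle$ is a poset, $\langle A,\cdot\rangle$ is a semigroup (we write $xy$ for $x\cdot y$), and for all $x,y,z$: $xy\le z\iff x\le z/y\iff y\le x\backslash z$. An element $p$ is positive if $a\le pa$ and $a\le ap$ for all $a\in A$; it is idempotent if $pp=p$. *)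

(* A residuated semigroup <A, <=, ., \, />.
   ldiv x z = x\z, rdiv z y = z/y. *)
Record ResSemigroup := {
  carrier :> Type;
  le : carrier -> carrier -> Prop;
  mul : carrier -> carrier -> carrier;
  ldiv : carrier -> carrier -> carrier;
  rdiv : carrier -> carrier -> carrier;
  le_refl : forall x, le x x;
  le_trans : forall x y z, le x y -> le y z -> le x z;
  le_antisym : forall x y, le x y -> le y x -> x = y;
  mul_assoc : forall x y z, mul (mul x y) z = mul x (mul y z);
  res_rdiv : forall x y z, le (mul x y) z <-> le x (rdiv z y);
  res_ldiv : forall x y z, le (mul x y) z <-> le y (ldiv x z)
}.

Arguments le {_}.
Arguments mul {_}.
Arguments ldiv {_}.
Arguments rdiv {_}.

Definition positive (A : ResSemigroup) (p : A) : Prop :=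
  forall a : A, le a (mul p a) /\ le a (mul a p).

Definition idempotent (A : ResSemigroup) (p : A) : Prop := mul p p = p.

Definition Idp (A : ResSemigroup) (p : A) : Prop := positive A p /\ idempotent A p.

Definition Ablock_l (A : ResSemigroup) (p : A) (a : A) : Prop := ldiv a a = p.
Definition Ablock_r (A : ResSemigroup) (p : A) (a : A) : Prop := rdiv a a = p.

Definition partition_family (A : ResSemigroup) (B : A -> A -> Prop) : Prop :=
  (forall a : A, exists p, Idp A p /\ B p a) /\
  (forall p q : A, Idp A p -> Idp A q -> p <> q ->
     forall a : A, ~ (B p a /\ B q a)).

From Stdlib Require Import Setoid.

(* The divisors [a/a] and [a\a] always satisfy [(a/a)(a/a) <= a/a] and
   [(a\a)(a\a) <= a\a], and a positive idempotent [p] equals [p/p] and [p\p].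
   Hence [a/a] is a positive idempotent as soon as it is positive, and the
   positive idempotents are exactly the positive divisors.  The blocks [_pA]
   partition [A] precisely when every [a/a] lands in [Idp A], since the block
   of [a] can only be the one indexed by [a/a]. *)

Section ResiduatedSemigroup.
Variable A : ResSemigroup.
Implicit Types a b p x y : A.

Lemma le_mul2l a b c : le a b -> le (mul c a) (mul c b).
Proof.
intro Hab; apply res_ldiv; apply (le_trans _ _ b); [exact Hab|].
apply res_ldiv, le_refl.
Qed.

Lemma le_mul2r a b c : le a b -> le (mul a c) (mul b c).
Proof.
intro Hab; apply res_rdiv; apply (le_trans _ _ b); [exact Hab|].
apply res_rdiv, le_refl.
Qed.

Lemma mul_rdiv_le x : le (mul (rdiv x x) x) x.
Proof. apply res_rdiv, le_refl. Qed.

Lemma mul_ldiv_le x : le (mul x (ldiv x x)) x.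
Proof. apply res_ldiv, le_refl. Qed.

Lemma rdiv_sqr_le x : le (mul (rdiv x x) (rdiv x x)) (rdiv x x).
Proof.
apply (proj1 (res_rdiv A _ _ _)); rewrite mul_assoc.
apply (le_trans _ _ (mul (rdiv x x) x)); [apply le_mul2l|]; apply mul_rdiv_le.
Qed.

Lemma ldiv_sqr_le x : le (mul (ldiv x x) (ldiv x x)) (ldiv x x).
Proof.
apply (proj1 (res_ldiv A _ _ _)); rewrite <- mul_assoc.
apply (le_trans _ _ (mul x (ldiv x x))); [apply le_mul2r|]; apply mul_ldiv_le.
Qed.

Lemma rdiv_self_eq p :
  (forall a, le a (mul a p)) -> le (mul p p) p -> rdiv p p = p.
Proof.
intros Hp Hpp; apply le_antisym.
- apply (le_trans _ _ (mul (rdiv p p) p)); [apply Hp | apply mul_rdiv_le].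
- apply res_rdiv, Hpp.
Qed.

Lemma ldiv_self_eq p :
  (forall a, le a (mul p a)) -> le (mul p p) p -> ldiv p p = p.
Proof.
intros Hp Hpp; apply le_antisym.
- apply (le_trans _ _ (mul p (ldiv p p))); [apply Hp | apply mul_ldiv_le].
- apply res_ldiv, Hpp.
Qed.

Lemma Idp_rdiv_self p : Idp A p -> rdiv p p = p.
Proof.
intros [Hpos Hidem]; apply rdiv_self_eq; [apply Hpos|].
rewrite Hidem; apply le_refl.
Qed.

Lemma Idp_ldiv_self p : Idp A p -> ldiv p p = p.
Proof.
intros [Hpos Hidem]; apply ldiv_self_eq; [apply Hpos|].
rewrite Hidem; apply le_refl.
Qed.

Lemma Idp_rdiv x : Idp A (rdiv x x) <-> positive A (rdiv x x).
Proof.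
split; [intros [Hpos _]; exact Hpos|].
intro Hpos; split; [exact Hpos|].
apply le_antisym; [apply rdiv_sqr_le | apply Hpos].
Qed.

Lemma Idp_ldiv x : Idp A (ldiv x x) <-> positive A (ldiv x x).
Proof.
split; [intros [Hpos _]; exact Hpos|].
intro Hpos; split; [exact Hpos|].
apply le_antisym; [apply ldiv_sqr_le | apply Hpos].
Qed.

(* (1) only gives [y <= (x/x) y]; for [p := a\a] this still yields
   [y <= p y] because (1) also makes [p/p = p]. *)
Lemma unit_divisors_iff_positive :
  (forall x y, le y (mul (rdiv x x) y) /\ le y (mul y (ldiv x x))) <->
  (forall a, positive A (ldiv a a) /\ positive A (rdiv a a)).
Proof.
split.
- intros H a.
  assert (Hl : rdiv (ldiv a a) (ldiv a a) = ldiv a a).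
  { apply rdiv_self_eq; [intro b; apply H | apply ldiv_sqr_le]. }
  assert (Hr : ldiv (rdiv a a) (rdiv a a) = rdiv a a).
  { apply ldiv_self_eq; [intro b; apply H | apply rdiv_sqr_le]. }
  split; intro y; split; try apply H.
  + rewrite <- Hl; apply H.
  + rewrite <- Hr; apply H.
- intros H x y; split; [apply (H x) | apply (H x)].
Qed.

Lemma positive_rdiv_iff_Idp :
  (forall a, positive A (rdiv a a)) <->
  (forall p, Idp A p <-> exists a, p = rdiv a a).
Proof.
split.
- intros H p; split.
  + intro Hp; exists p; symmetry; apply Idp_rdiv_self, Hp.
  + intros [a ->]; apply Idp_rdiv, H.
- intros H a; apply Idp_rdiv, H; exists a; reflexivity.
Qed.

Lemma positive_ldiv_iff_Idp :
  (forall a, positive A (ldiv a a)) <->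
  (forall p, Idp A p <-> exists a, p = ldiv a a).
Proof.
split.
- intros H p; split.
  + intro Hp; exists p; symmetry; apply Idp_ldiv_self, Hp.
  + intros [a ->]; apply Idp_ldiv, H.
- intros H a; apply Idp_ldiv, H; exists a; reflexivity.
Qed.

Lemma Idp_rdiv_iff_partition :
  (forall p, Idp A p <-> exists a, p = rdiv a a) <->
  partition_family A (Ablock_r A).
Proof.
split.
- intro H; split.
  + intro a; exists (rdiv a a); split; [apply H; exists a|]; reflexivity.
  + intros p q _ _ Hpq a [Hp Hq]; apply Hpq.
    unfold Ablock_r in Hp, Hq; congruence.
- intros [Hcover _] p; split.
  + intro Hp; exists p; symmetry; apply Idp_rdiv_self, Hp.
  + intros [a ->]; destruct (Hcover a) as [q [Hq Ha]].
    unfold Ablock_r in Ha; rewrite Ha; exact Hq.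
Qed.

Lemma Idp_ldiv_iff_partition :
  (forall p, Idp A p <-> exists a, p = ldiv a a) <->
  partition_family A (Ablock_l A).
Proof.
split.
- intro H; split.
  + intro a; exists (ldiv a a); split; [apply H; exists a|]; reflexivity.
  + intros p q _ _ Hpq a [Hp Hq]; apply Hpq.
    unfold Ablock_l in Hp, Hq; congruence.
- intros [Hcover _] p; split.
  + intro Hp; exists p; symmetry; apply Idp_ldiv_self, Hp.
  + intros [a ->]; destruct (Hcover a) as [q [Hq Ha]].
    unfold Ablock_l in Ha; rewrite Ha; exact Hq.
Qed.

End ResiduatedSemigroup.

Theorem lemma3p1 (A : ResSemigroup) :
  let P1 := forall x y : A, le y (mul (rdiv x x) y) /\ le y (mul y (ldiv x x)) in
  let P2 := forall a : A, positive A (ldiv a a) /\ positive A (rdiv a a) in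
  let P3 := (forall p : A, Idp A p <-> exists a : A, p = rdiv a a) /\
            (forall p : A, Idp A p <-> exists a : A, p = ldiv a a) in
  let P4 := partition_family A (Ablock_r A) /\ partition_family A (Ablock_l A) in
  (P1 <-> P2) /\ (P2 <-> P3) /\ (P3 <-> P4).
Proof.
cbv zeta; split; [|split].
- apply unit_divisors_iff_positive.
- rewrite <- (positive_rdiv_iff_Idp A), <- (positive_ldiv_iff_Idp A).
  split.
  + intro H; split; intro a; apply H.
  + intros [Hr Hl] a; split; [apply Hl | apply Hr].
- rewrite (Idp_rdiv_iff_partition A), (Idp_ldiv_iff_partition A).
  reflexivity.
Qed.
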